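(* Let $c$ be a cost function on $(\mathbb{R}^n)^N$, $\alpha_1,\dots,\alpha_N>0$, and $m_1,\dots,m_N$ measures on $\mathbb{R}^n$. Let $(V_1,\dots,V_N)$ be an admissible tuple with $0<\int e^{-\alpha_iV_i}dm_i<\infty$ for all $i$, and let $\nu_i=e^{-\alpha_iV_i}m_i/\int e^{-\alpha_iV_i}dm_i$. Assume that the Kantorovich duality holds for $(c;\nu_1,\dots,\nu_N)$, with optimal plan $\gamma$ and dual minimizer $(\Phi_1,\dots,\Phi_N)$. Then $$\prod_{i=1}^N\Bigl(\int e^{-\alpha_iV_i}dm_i\Bigr)^{1/\alpha_i}\le\prod_{i=1}^N\Bigl(\int e^{-\alpha_i\Phi_i}dm_i\Bigr)^{1/\alpha_i}.$$
   Context: Points of $(\mathbb{R}^n)^N$ are written $x=(x_1,\dots,x_N)$, $x_i\in\mathbb{R}^n$. A tuple $(V_1,\dots,V_N)$ of functions $V_i:\mathbb{R}^n\to(-\infty,+\infty]$ is admissible (for the cost $c$) if $\sum_{i=1}^N V_i(x_i)\ge c(x)$ for all $x$. Kantorovich duality: for probability measures $\mu_1,\dots,\mu_N$ on $\mathbb{R}^n$, the primal problem is to maximize $\int c\,d\pi$ over probability measures $\pi$ on $(\mathbb{R}^n)^N$ with $i$-th marginal $\mu_i$ for all $i$; the dual problem is to minimize $\sum_i\int f_i\,d\mu_i$ over admissible tuples $(f_i)$ with $f_i\in L^1(\mu_i)$. We say the Kantorovich duality holds for $(c;\mu_1,\dots,\mu_N)$ if the primal problem has a maximizer, the dual problem has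 a minimizer, and the two optimal values are equal and finite. *)

From HB Require Import structures.
From mathcomp Require Import all_boot all_order all_algebra.
From mathcomp Require Import all_classical all_reals all_analysis.
From mathcomp Require Import measurable_realfun.
Set Implicit Arguments. Unset Strict Implicit. Unset Printing Implicit Defensive.
Import Order.TTheory GRing.Theory Num.Theory.
Local Open Scope classical_set_scope.
Local Open Scope ring_scope.
Local Open Scope ereal_scope.

(* Points of (R^n)^N are modelled as N.-tuple (n.-tuple R), with the product
   (Borel) sigma-algebras provided by MathComp-Analysis for tuples.
   The i-th coordinate x_i of x is [tnth x i]. *)

Section Kantorovich.
Context {R : realType} {d : measure_display} {T : measurableType d} {N : nat}.

Definition admissible (c : N.-tuple T -> \bar R) (V : 'I_N -> T -> \bar R) :=
  (forall i y, V i y != -oo) /\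
  (forall x : N.-tuple T, c x <= \sum_(i < N) V i (tnth x i)).

Definition has_marginals (pi : probability (N.-tuple T) R)
    (mu : 'I_N -> probability T R) :=
  forall (i : 'I_N) (A : set T), measurable A ->
    pi ((fun x : N.-tuple T => tnth x i) @^-1` A) = mu i A.

Definition dual_feasible (c : N.-tuple T -> \bar R)
    (mu : 'I_N -> probability T R) (f : 'I_N -> T -> \bar R) :=
  admissible c f /\ (forall i, (mu i).-integrable setT (f i)).

Definition dual_value (mu : 'I_N -> probability T R) (f : 'I_N -> T -> \bar R) :=
  \sum_(i < N) \int[mu i]_x f i x.

Definition kantorovich_duality_with (c : N.-tuple T -> \bar R)
    (mu : 'I_N -> probability T R) (gamma : probability (N.-tuple T) R)
    (Phi : 'I_N -> T -> \bar R) :=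
  [/\ (has_marginals gamma mu /\
      (forall pi : probability (N.-tuple T) R, has_marginals pi mu ->
         \int[pi]_x c x <= \int[gamma]_x c x)),
      dual_feasible c mu Phi,
      (forall f, dual_feasible c mu f -> dual_value mu Phi <= dual_value mu f),
      \int[gamma]_x c x = dual_value mu Phi &
      \int[gamma]_x c x \is a fin_num].

Definition kantorovich_duality_holds (c : N.-tuple T -> \bar R)
    (mu : 'I_N -> probability T R) :=
  exists gamma Phi, kantorovich_duality_with c mu gamma Phi.

End Kantorovich.

Definition gibbs_mass {R : realType} {d : measure_display} {T : measurableType d}
  (m : {measure set T -> \bar R}) (a : R) (V : T -> \bar R) : \bar R :=
  \int[m]_x expeR (- a%:E * V x).

From HB Require Import structures.
From mathcomp Require Import all_boot all_order all_algebra.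
From mathcomp Require Import all_classical all_reals all_analysis.
From mathcomp Require Import measurable_realfun lra.
Set Implicit Arguments. Unset Strict Implicit. Unset Printing Implicit Defensive.
Import Order.TTheory GRing.Theory Num.Theory.
Local Open Scope classical_set_scope.
Local Open Scope ring_scope.
Local Open Scope ereal_scope.
Import HBNNSimple.

(* Along the optimal plan gamma one has sum_i Phi_i(x_i) = c(x) <= sum_i V_i(x_i)
   gamma-almost everywhere, because Phi is admissible and its dual value equals
   the primal value.  Linearising the exponential (e^y >= 1 + y) gives, for any
   reals s_i, the pointwise bound
     sum_i 1/alpha_i - sum_i s_i
       <= sum_i (1/alpha_i) e^{-alpha_i s_i} e^{alpha_i (V_i - Phi_i)(x_i)}.
   Integrating against gamma, whose marginals are the Gibbs measures nu_i, bounds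
   the i-th term by (1/alpha_i) e^{-alpha_i s_i} W_i / Z_i, where Z_i and W_i are
   the Gibbs masses of V_i and Phi_i.  The choice s_i = (1/alpha_i) ln (W_i / Z_i)
   turns this into sum_i (1/alpha_i) ln (W_i / Z_i) >= 0, which is the theorem
   after exponentiation. *)

Lemma measurable_expeR (R : realType) : measurable_fun [set: \bar R] (@expeR R).
Proof.
have -> : @expeR R = fun x => if x \is a fin_num then (expR (fine x))%:E
                              else maxe x 0.
  by apply: boolp.funext => -[r| |] //=; rewrite maxEle leNye.
apply: measurable_fun_ifT => //=.
- by apply: (measurable_fun_bool true); exact/emeasurable_fin_num.
- by apply/measurable_EFinP/measurableT_comp => //; exact: measurable_expR.
- exact: measurable_maxe.
Qed.

(* Not an equality: at x = +oo or -oo the product is +oo * 0 = 0. *)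
Lemma expeR_mulN_le1 (R : realType) (x : \bar R) : expeR x * expeR (- x) <= 1.
Proof. by rewrite -expeRD -expeR0 lee_expeR sube_le0. Qed.

Section integral_density.
Context d (T : measurableType d) (R : realType).

Lemma ge0_integral_mule_nnsfun_approx
    (mu : {measure set T -> \bar R}) (f k : T -> \bar R)
    (mf : measurable_fun setT f) :
  (forall x, 0 <= f x) -> measurable_fun setT k -> (forall x, 0 <= k x) ->
  (forall x, k x \is a fin_num) ->
  \int[mu]_x (f x * k x) =
  limn (fun n => \int[mu]_x ((nnsfun_approx measurableT mf n x)%:E * k x)).
Proof.
move=> f_ge0 mk k_ge0 k_fin; set h := nnsfun_approx measurableT mf.
have fkE x : f x * k x = limn (fun n => (h n x)%:E * k x).
  apply/esym/cvg_lim => //; apply: cvgeZr; first exact: k_fin.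
  exact: cvg_nnsfun_approx.
under eq_integral do rewrite fkE.
apply: monotone_convergence => //.
- by move=> n; apply/emeasurable_funM => //; exact/measurable_EFinP.
- by move=> n x _; rewrite mule_ge0 ?lee_fin.
- move=> x _ a b ab; rewrite lee_wpmul2r ?lee_fin //.
  exact/lefP/nd_nnsfun_approx.
Qed.

Variables (m nu : {measure set T -> \bar R}) (g : T -> \bar R).
Hypotheses (mg : measurable_fun setT g) (g_ge0 : forall x, 0 <= g x)
  (g_fin : forall x, g x \is a fin_num)
  (nuE : forall A, measurable A -> nu A = \int[m]_(x in A) g x).

Lemma integral_nnsfun_density (h : {nnsfun T >-> R}) :
  \int[nu]_x (h x)%:E = \int[m]_x ((h x)%:E * g x).
Proof.
have mhg r : measurable_fun setT (fun x => (r * \1_(h @^-1` [set r]) x)%:E * g x).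
  by apply: emeasurable_funM => //; apply/measurable_EFinP; exact: measurable_funM.
rewrite [RHS](eq_integral (fun x =>
    \sum_(r \in range h) (r * \1_(h @^-1` [set r]) x)%:E * g x)); last first.
  move=> x _.
  rewrite -ge0_mule_fsuml => [|r]; last exact: nnfun_muleindic_ge0.
  by rewrite fsumEFin // -fimfunE.
rewrite ge0_integral_fsum //; last first.
  by move=> r x _; rewrite mule_ge0 // nnfun_muleindic_ge0.
rewrite integralT_nnsfun sintegralE; apply: eq_fsbigr => r /[!inE] -[t _ <-].
under eq_integral do rewrite EFinM -muleA.
rewrite ge0_integralZl //; last 3 first.
- by apply: emeasurable_funM => //; apply/measurable_EFinP; exact: measurable_indic.
- by move=> x _; rewrite mule_ge0 // lee_fin indic_ge0.
- by rewrite lee_fin.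
rewrite nuE; last exact: measurable_funPTI.
rewrite integral_mkcond epatch_indic.
by congr (_ * _); apply: eq_integral => x _; rewrite muleC.
Qed.

Lemma ge0_integral_density (f : T -> \bar R) : measurable_fun setT f ->
  (forall x, 0 <= f x) -> \int[nu]_x f x = \int[m]_x (f x * g x).
Proof.
move=> mf f_ge0; rewrite (ge0_integral_mule_nnsfun_approx m mf) //.
under eq_integral do rewrite -[f _]mule1.
rewrite (ge0_integral_mule_nnsfun_approx nu mf) //.
congr (limn _); apply: boolp.funext => n /=.
by under eq_integral do rewrite mule1; exact: integral_nnsfun_density.
Qed.

End integral_density.

Section integral_equality_ae.
Context d (T : measurableType d) (R : realType).
Variables (mu : {measure set T -> \bar R}) (f g : T -> \bar R).
Hypotheses (g_int : mu.-integrable setT g) (mf : measurable_fun setT f)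
  (f_le_g : forall x, f x <= g x).

Lemma integrable_of_le_fin_integral : \int[mu]_x f x \is a fin_num ->
  mu.-integrable setT f.
Proof.
move=> f_fin; apply/integrableP; split => //.
have fpos_le : \int[mu]_x f^\+ x <= \int[mu]_x g^\+ x.
  apply: ge0_le_integral => //; first exact: measurable_funepos.
  - by apply: measurable_funepos; case/integrableP: g_int.
  - by move=> x _; apply: (@funepos_le _ _ setT) => [y _|]; [exact: f_le_g|rewrite inE].
have fpos_lty := le_lt_trans fpos_le (integral_funepos_lt_pinfty measurableT g_int).
have fneg_lty : \int[mu]_x f^\- x < +oo.
  move: f_fin fpos_lty; rewrite integralE.
  have : 0 <= \int[mu]_x f^\+ x by apply: integral_ge0 => x _; exact: funepos_ge0.
  have : 0 <= \int[mu]_x f^\- x by apply: integral_ge0 => x _; exact: funeneg_ge0.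
  move: (\int[mu]_x f^\+ x) (\int[mu]_x f^\- x) => [s| |] [r| |] //= *.
  exact: ltry.
rewrite (_ : (fun x => `|f x|) = f^\+ \+ f^\-) ?ge0_integralD //; last first.
  by rewrite -fune_abse.
- exact: measurable_funeneg.
- exact: measurable_funepos.
- exact: lte_add_pinfty.
Qed.

Lemma ae_ge_of_integral_eq : \int[mu]_x f x = \int[mu]_x g x ->
  {ae mu, forall x, g x <= f x}.
Proof.
move=> fg_eq.
have f_int : mu.-integrable setT f.
  by apply: integrable_of_le_fin_integral; rewrite fg_eq; exact: integrable_fin_num.
have g_fin := integrable_ae measurableT g_int.
have mgf : measurable_fun setT (g \- f).
  by apply: emeasurable_funB => //; case/integrableP: g_int.
have : \int[mu]_x `|(g \- f) x| = 0.
  rewrite (@ae_eq_integral _ _ _ mu setT (g \- f)) //.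
  - by rewrite integralB // fg_eq subee // integrable_fin_num.
  - exact: measurableT_comp.
  - apply: filterS g_fin => x /(_ I) gx _.
    by rewrite gee0_abs // subre_ge0 //; exact: f_le_g.
move/(ae_eq_integral_abs mu measurableT mgf).1; apply: filterS2 g_fin.
move=> x /(_ I) + /(_ I) /=; move: (f_le_g x).
case: (g x) => [s| |] //; case: (f x) => [r| |] //= _ _ /eqP.
by rewrite eqe subr_eq0 => /eqP ->.
Qed.

End integral_equality_ae.

Section marginal.
Context d (T : measurableType d) (R : realType) (N : nat).
Variables (gamma : {measure set (N.-tuple T) -> \bar R})
  (mu : {measure set T -> \bar R}) (i : 'I_N).
Hypothesis gamma_i : forall A, measurable A ->
  gamma ((fun x : N.-tuple T => tnth x i) @^-1` A) = mu A.

Let proj_i := fun x : N.-tuple T => tnth x i.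
Let mproj_i : measurable_fun setT proj_i. Proof. exact: measurable_tnth. Qed.

Let mu_pushforward (A : set T) : measurable A -> A `<=` setT ->
  mu A = pushforward gamma proj_i A.
Proof. by move=> mA _; rewrite /pushforward gamma_i. Qed.

Lemma ge0_integral_marginal (f : T -> \bar R) : measurable_fun setT f ->
  (forall x, 0 <= f x) -> \int[gamma]_x f (tnth x i) = \int[mu]_x f x.
Proof.
move=> mf f_ge0; rewrite (eq_measure_integral _ mu_pushforward).
by rewrite (ge0_integral_pushforward mproj_i) // preimage_setT.
Qed.

Lemma integrable_marginal (f : T -> \bar R) : mu.-integrable setT f ->
  gamma.-integrable setT (fun x => f (tnth x i)).
Proof.
move=> /integrableP[mf fi]; apply/integrableP; split.
  exact: measurableT_comp.
rewrite (@ge0_integral_marginal (abse \o f)) //; first exact: measurableT_comp.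
by move=> x; exact: abse_ge0.
Qed.

Lemma integral_marginal (f : T -> \bar R) : mu.-integrable setT f ->
  \int[gamma]_x f (tnth x i) = \int[mu]_x f x.
Proof.
move=> fi; rewrite (eq_measure_integral _ mu_pushforward) (integral_pushforward mproj_i) //.
- by case/integrableP: fi.
- by rewrite preimage_setT; exact: integrable_marginal.
Qed.

Lemma ae_marginal (P : T -> Prop) : {ae mu, forall x, P x} ->
  {ae gamma, forall x, P (tnth x i)}.
Proof.
case=> A [mA muA sA]; exists (proj_i @^-1` A); split.
- by rewrite -[X in measurable X]setTI; exact: mproj_i.
- by rewrite gamma_i.
- by move=> x /= nPx; apply: sA.
Qed.

End marginal.

Lemma sum_invr_subr_le_sum_expR (R : realType) (N : nat) (alpha s t : 'I_N -> R) :
  (forall i, 0 < alpha i)%R -> (0 <= \sum_(i < N) t i)%R ->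
  (\sum_(i < N) (alpha i)^-1 - \sum_(i < N) s i <=
   \sum_(i < N) (alpha i)^-1 * expR (- alpha i * s i) * expR (alpha i * t i))%R.
Proof.
move=> alpha_gt0 t_ge0.
apply: (@le_trans _ _ (\sum_(i < N) ((alpha i)^-1 - s i + t i))%R).
  by rewrite big_split /= sumrB lerDl.
apply: ler_sum => i _.
have ai_inv_gt0 : (0 < (alpha i)^-1)%R by rewrite invr_gt0.
rewrite -mulrA -expRD (_ : - alpha i * s i + alpha i * t i =
  alpha i * (t i - s i))%R; last by rewrite mulNr mulrBr addrC.
have := expR_ge1Dx (alpha i * (t i - s i)).
move/(ler_wpM2l (ltW ai_inv_gt0)).
rewrite mulrDr mulr1 mulrA mulVf ?gt_eqF // mul1r; lra.
Qed.

Lemma sum_invr_subr_le_sum_expeR (R : realType) (N : nat) (alpha s : 'I_N -> R)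
    (phi v : 'I_N -> \bar R) :
  (forall i, 0 < alpha i)%R -> (forall i, phi i \is a fin_num) ->
  (forall i, v i != -oo) -> \sum_(i < N) phi i <= \sum_(i < N) v i ->
  ((\sum_(i < N) (alpha i)^-1 - \sum_(i < N) s i)%R)%:E <=
  \sum_(i < N) ((alpha i)^-1 * expR (- alpha i * s i))%:E *
     (expeR ((alpha i)%:E * v i) * expeR (- (alpha i)%:E * phi i)).
Proof.
move=> alpha_gt0 phi_fin v_neqNy phi_le_v.
have coef_gt0 i : (0 < (alpha i)^-1 * expR (- alpha i * s i))%R.
  by rewrite mulr_gt0 ?expR_gt0 ?invr_gt0.
have [[j /eqP vj]|/forallNP v_neqy] := pselect (exists j, v j == +oo).
  rewrite [X in _ <= X](bigD1 j) //= vj gt0_muley ?lte_fin //=.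
  rewrite gt0_mulye; last first.
    by apply: expeR_gt0; rewrite -(fineK (phi_fin j)) ltNyr.
  rewrite gt0_muley ?lte_fin // addye ?leey //.
  rewrite gt_eqF // (lt_le_trans ltNy0) //.
  by apply: sume_ge0 => i _; rewrite !mule_ge0 ?expeR_ge0 // lee_fin ltW.
have v_fin i : v i \is a fin_num.
  by rewrite fin_numE v_neqNy; apply/eqP => vi; apply: (v_neqy i); rewrite vi.
have sumEfine (u : 'I_N -> \bar R) : (forall i, u i \is a fin_num) ->
    \sum_(i < N) u i = (\sum_(i < N) fine (u i))%:E.
  by move=> u_fin; rewrite -sumEFin; apply: eq_bigr => i _; rewrite fineK.
move: phi_le_v; rewrite (sumEfine phi) // (sumEfine v) // lee_fin.
rewrite -subr_ge0 -sumrB => t_ge0.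
apply: le_trans (_ : _ <= (\sum_(i < N) (alpha i)^-1 * expR (- alpha i * s i) *
  expR (alpha i * (fine (v i) - fine (phi i))))%:E) _.
  by rewrite lee_fin; exact: sum_invr_subr_le_sum_expR.
rewrite -sumEFin; apply: lee_sum => i _.
rewrite -(fineK (v_fin i)) -(fineK (phi_fin i)) /=.
by rewrite -EFinM lee_fin -expRD !mulNr mulrBr.
Qed.

Section dual_optimizer.
Context d (T : measurableType d) (R : realType) (N : nat).
Variables (c : N.-tuple T -> \bar R) (mu : 'I_N -> probability T R)
  (gamma : probability (N.-tuple T) R) (Phi : 'I_N -> T -> \bar R).
Hypotheses (mc : measurable_fun setT c)
  (KD : kantorovich_duality_with c mu gamma Phi).

Let gamma_marginal : has_marginals gamma mu. Proof. by case: KD => -[]. Qed.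
Let Phi_feasible : dual_feasible c mu Phi. Proof. by case: KD. Qed.

Lemma ae_dual_fin_num :
  {ae gamma, forall x, forall i, Phi i (tnth x i) \is a fin_num}.
Proof.
apply: filter_forall => i.
have /integrable_ae := Phi_feasible.2 i => /(_ measurableT).
by move/(ae_marginal (gamma_marginal i)); apply: filterS => x /(_ I).
Qed.

Lemma ae_dual_sum_le_cost :
  {ae gamma, forall x, \sum_(i < N) Phi i (tnth x i) <= c x}.
Proof.
have [[_ Phi_adm] Phi_int] := Phi_feasible.
have Phi_int_gamma i : gamma.-integrable setT (fun x => Phi i (tnth x i)).
  exact: integrable_marginal (gamma_marginal i) _ (Phi_int i).
apply: ae_ge_of_integral_eq => //; first exact: integrable_sum.
case: KD => _ _ _ -> _; rewrite integral_sum //.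
rewrite /dual_value; apply: eq_bigr => i _.
by rewrite (integral_marginal (gamma_marginal i) (Phi_int i)).
Qed.

Variables (alpha : 'I_N -> R) (V : 'I_N -> T -> \bar R).
Hypotheses (alpha_gt0 : forall i, (0 < alpha i)%R)
  (mV : forall i, measurable_fun setT (V i)) (V_adm : admissible c V).

Lemma sum_invr_subr_le_integral_tilt (s : 'I_N -> R) :
  ((\sum_(i < N) (alpha i)^-1 - \sum_(i < N) s i)%R)%:E <=
  \sum_(i < N) ((alpha i)^-1 * expR (- alpha i * s i))%:E *
    \int[mu i]_y (expeR ((alpha i)%:E * V i y) * expeR (- (alpha i)%:E * Phi i y)).
Proof.
have mPhi i : measurable_fun setT (Phi i) by case/integrableP: (Phi_feasible.2 i).
set a := fun i => ((alpha i)^-1 * expR (- alpha i * s i))%R.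
have a_ge0 i : (0 <= a i)%R by rewrite mulr_ge0 ?expR_ge0 // invr_ge0 ltW.
set F := fun i y => expeR ((alpha i)%:E * V i y) * expeR (- (alpha i)%:E * Phi i y).
have mF i : measurable_fun setT (F i).
  by apply: emeasurable_funM; apply: measurableT_comp;
    [exact: measurable_expeR|exact: measurable_funeM|
     exact: measurable_expeR|exact: measurable_funeM].
have mFi i : measurable_fun setT (fun x : N.-tuple T => (a i)%:E * F i (tnth x i)).
  by apply/measurable_funeM/measurableT_comp => //; exact: measurable_tnth.
have F_ge0 i y : 0 <= F i y by rewrite mule_ge0 ?expeR_ge0.
have Fi_ge0 i x : 0 <= (a i)%:E * F i (tnth x i) by rewrite mule_ge0 ?lee_fin.
have -> : \sum_(i < N) (a i)%:E * \int[mu i]_y F i y =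
    \int[gamma]_x \sum_(i < N) (a i)%:E * F i (tnth x i).
  rewrite ge0_integral_sum //.
  apply: eq_bigr => i _; rewrite ge0_integralZl ?lee_fin //.
  - by rewrite (ge0_integral_marginal (gamma_marginal i)).
  - by apply: measurableT_comp => //; exact: measurable_tnth.
set K := (_ - _)%R.
have [K_le0|K_gt0] := leP K 0%R.
  apply: le_trans (integral_ge0 _ _); first by rewrite lee_fin.
  by move=> x _; apply: sume_ge0 => i _; exact: Fi_ge0.
rewrite -[leLHS]mule1 -(probability_setT gamma) -integral_cst //.
apply: ae_ge0_le_integral => //.
- by move=> x _; rewrite lee_fin ltW.
- by move=> x _; apply: sume_ge0 => i _; exact: Fi_ge0.
- by apply: emeasurable_sum => i; exact: mFi.
apply: filterS2 ae_dual_fin_num ae_dual_sum_le_cost => x Phi_fin Phi_le_c _.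
apply: sum_invr_subr_le_sum_expeR => //; first by move=> i; exact: V_adm.1.
exact: le_trans Phi_le_c (V_adm.2 x).
Qed.

End dual_optimizer.

Section gibbs_measure.
Context d (T : measurableType d) (R : realType).
Variables (m : {measure set T -> \bar R}) (a : R) (V : T -> \bar R)
  (nu : probability T R).
Hypotheses (a_gt0 : (0 < a)%R) (mV : measurable_fun setT V)
  (V_neqNy : forall y, V y != -oo) (Z_gt0_lty : 0 < gibbs_mass m a V < +oo)
  (nuE : forall A, measurable A ->
    nu A = (\int[m]_(x in A) expeR (- a%:E * V x)) *
           ((fine (gibbs_mass m a V))^-1)%:E).

Let z := fine (gibbs_mass m a V).
Let z_gt0 : (0 < z)%R. Proof. exact: fine_gt0. Qed.

Let mexpeR (f : T -> \bar R) (k : R) : measurable_fun setT f ->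
  measurable_fun setT (fun y => expeR (k%:E * f y)).
Proof.
by move=> mf; apply: measurableT_comp; [exact: measurable_expeR|exact: measurable_funeM].
Qed.

Let density y := expeR (- a%:E * V y) * (z^-1)%:E.

Let mdensity : measurable_fun setT density.
Proof. by apply: emeasurable_funM => //; exact: mexpeR. Qed.

Let density_ge0 y : 0 <= density y.
Proof. by rewrite mule_ge0 ?expeR_ge0 // lee_fin invr_ge0 ltW. Qed.

Let integral_gibbs (f : T -> \bar R) : measurable_fun setT f ->
  (forall y, 0 <= f y) -> \int[nu]_y f y = \int[m]_y (f y * density y).
Proof.
have density_fin y : density y \is a fin_num.
  rewrite /density; move: (V_neqNy y); case: (V y) => [r| |] //= _.
  by rewrite mulry ltr0_sg ?oppr_lt0 // mulN1e /= mul0e.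
have nu_density A : measurable A -> nu A = \int[m]_(x in A) density x.
  move=> mA; rewrite nuE // ge0_integralZr //.
  - exact/measurable_funTS/mexpeR.
  - by move=> x _; exact: expeR_ge0.
  - by rewrite lee_fin invr_ge0 ltW.
exact: ge0_integral_density.
Qed.

Lemma integral_gibbs_tilt_le (Phi : T -> \bar R) : measurable_fun setT Phi ->
  \int[nu]_y (expeR (a%:E * V y) * expeR (- a%:E * Phi y)) <=
  gibbs_mass m a Phi * (z^-1)%:E.
Proof.
move=> mPhi; have mexpPhi := mexpeR (- a) mPhi.
have mtilt : measurable_fun setT (fun y => expeR (a%:E * V y) * expeR (- a%:E * Phi y)).
  by apply: emeasurable_funM => //; exact: mexpeR.
rewrite integral_gibbs // => [|y]; last by rewrite mule_ge0 ?expeR_ge0.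
rewrite /gibbs_mass -ge0_integralZr // => [|y _|]; last 2 first.
- exact: expeR_ge0.
- by rewrite lee_fin invr_ge0 ltW.
apply: ge0_le_integral => //.
- by move=> y _; rewrite !mule_ge0 ?expeR_ge0 // lee_fin invr_ge0 ltW.
- exact: emeasurable_funM.
- exact: emeasurable_funM.
move=> y _; rewrite /density muleACA mulNe.
apply: le_trans (lee_wpmul2r _ (expeR_mulN_le1 _)) _; last by rewrite mul1e.
by rewrite mule_ge0 ?expeR_ge0 // lee_fin invr_ge0 ltW.
Qed.

(* Otherwise the tilt e^{a V - a Phi} would vanish nu-almost everywhere. *)
Lemma gibbs_mass_gt0 (Phi : T -> \bar R) : measurable_fun setT Phi ->
  {ae nu, forall y, Phi y \is a fin_num} -> 0 < gibbs_mass m a Phi.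
Proof.
move=> mPhi Phi_fin; set F := fun y => expeR (a%:E * V y) * expeR (- a%:E * Phi y).
have mF : measurable_fun setT F by apply: emeasurable_funM; exact: mexpeR.
have F_ge0 y : 0 <= F y by rewrite mule_ge0 ?expeR_ge0.
rewrite lt_neqAle integral_ge0 ?andbT => [|y _]; last exact: expeR_ge0.
apply/negP => /eqP W0.
have : \int[nu]_y `|F y| = 0.
  under eq_integral do rewrite gee0_abs //.
  apply/eqP; rewrite eq_le integral_ge0 ?andbT //.
  by have := integral_gibbs_tilt_le mPhi; rewrite -W0 mul0e.
move/(ae_eq_integral_abs nu measurableT mF).1 => F0.
have [A [mA nuA0 notA]] : {ae nu, forall y, False}.
  apply: filterS2 F0 Phi_fin => y /(_ I) /= /eqP + Phi_y.
  rewrite gt_eqF // mule_gt0 // expeR_gt0 //.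
    move: (V_neqNy y); case: (V y) => [r| |] //= _; first exact: ltNyr.
    by rewrite gt0_muley ?lte_fin.
  by rewrite -(fineK Phi_y) ltNyr.
have : nu setT <= nu A by apply: le_measure; rewrite ?inE // => y _; apply: notA => -[].
by rewrite nuA0 probability_setT lee_fin ler10.
Qed.

End gibbs_measure.

Lemma prod_powR_le_of_tilt (R : realType) (N : nat) (alpha z w : 'I_N -> R) :
  (forall i, 0 < alpha i)%R -> (forall i, 0 < z i)%R -> (forall i, 0 < w i)%R ->
  (forall s : 'I_N -> R, \sum_(i < N) (alpha i)^-1 - \sum_(i < N) s i <=
     \sum_(i < N) (alpha i)^-1 * expR (- alpha i * s i) * (w i / z i))%R ->
  (\prod_(i < N) z i `^ (alpha i)^-1 <= \prod_(i < N) w i `^ (alpha i)^-1)%R.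
Proof.
move=> alpha_gt0 z_gt0 w_gt0 /(_ (fun i => (alpha i)^-1 * ln (w i / z i))%R).
have wz_gt0 i : (0 < w i / z i)%R by rewrite divr_gt0.
under [X in (_ <= X)%R -> _]eq_bigr => i _.
  rewrite (mulrA (- alpha i)%R) mulNr mulrV ?unitfE ?gt_eqF // mulN1r expRN lnK ?posrE //.
  rewrite -mulrA mulVf ?gt_eqF // mulr1.
  over.
rewrite lerBlDr lerDl => log_ratio_ge0.
under eq_bigr => i _ do rewrite /powR gt_eqF //.
under [X in (_ <= X)%R]eq_bigr => i _ do rewrite /powR gt_eqF //.
rewrite -!expR_sum ler_expR -subr_ge0 -sumrB.
by under eq_bigr => i _ do rewrite -mulrBr -ln_div ?posrE //.
Qed.

Lemma prod_poweR_le_of_tilt (R : realType) (N : nat) (alpha z : 'I_N -> R)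
    (W : 'I_N -> \bar R) :
  (forall i, 0 < alpha i)%R -> (forall i, 0 < z i)%R -> (forall i, 0 < W i) ->
  (forall s : 'I_N -> R,
     ((\sum_(i < N) (alpha i)^-1 - \sum_(i < N) s i)%R)%:E <=
     \sum_(i < N) ((alpha i)^-1 * expR (- alpha i * s i))%:E * (W i * ((z i)^-1)%:E)) ->
  \prod_(i < N) (z i)%:E `^ (alpha i)^-1 <= \prod_(i < N) W i `^ (alpha i)^-1.
Proof.
move=> alpha_gt0 z_gt0 W_gt0 tilt.
have ainv_neq0 i : ((alpha i)^-1 != 0)%R by rewrite invr_eq0 gt_eqF.
have [[j Wj]|/forallNP W_neqy] := pselect (exists j, W j = +oo).
  have powW_gt0 i : 0 < W i `^ (alpha i)^-1.
    move: (W_gt0 i); case: (W i) => [r| |] //=; last by rewrite (negbTE (ainv_neq0 i)).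
    by rewrite !lte_fin => r_gt0; rewrite powR_gt0.
  rewrite [leRHS](bigD1 j) //= Wj /= (negbTE (ainv_neq0 j)) gt0_mulye ?leey //.
  by apply: (big_ind (fun x => 0 < x)) => // x y; exact: mule_gt0.
have W_fin i : W i \is a fin_num.
  by rewrite ge0_fin_numE ?ltW // ltey; apply/eqP; exact: W_neqy.
set w := fun i => fine (W i).
have WE i : W i = (w i)%:E by rewrite /w fineK.
have w_gt0 i : (0 < w i)%R by rewrite -lte_fin -WE.
under eq_bigr => i _ do rewrite poweR_EFin.
under [leRHS]eq_bigr => i _ do rewrite WE poweR_EFin.
rewrite !prodEFin lee_fin; apply: prod_powR_le_of_tilt => // s.
rewrite -lee_fin -sumEFin; move: (tilt s); congr (_ <= _).
by apply: eq_bigr => i _; rewrite WE.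
Qed.

Theorem theorem2p1 (R : realType) (n N : nat)
  (c : N.-tuple (n.-tuple R) -> \bar R) (c_meas : measurable_fun setT c)
  (alpha : 'I_N -> R) (alpha_gt0 : forall i, (0 < alpha i)%R)
  (m : 'I_N -> {measure set (n.-tuple R) -> \bar R})
  (V : 'I_N -> n.-tuple R -> \bar R)
  (V_meas : forall i, measurable_fun setT (V i))
  (V_adm : admissible c V)
  (Z_pos_fin : forall i, 0 < gibbs_mass (m i) (alpha i) (V i) < +oo)
  (nu : 'I_N -> probability (n.-tuple R) R)
  (nu_def : forall i (A : set (n.-tuple R)), measurable A ->
     nu i A = (\int[m i]_(x in A) expeR (- (alpha i)%:E * V i x))
              * ((fine (gibbs_mass (m i) (alpha i) (V i)))^-1)%:E)
  (gamma : probability (N.-tuple (n.-tuple R)) R)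
  (Phi : 'I_N -> n.-tuple R -> \bar R)
  (KD : kantorovich_duality_with c nu gamma Phi) :
  \prod_(i < N) (gibbs_mass (m i) (alpha i) (V i)) `^ (alpha i)^-1
  <= \prod_(i < N) (gibbs_mass (m i) (alpha i) (Phi i)) `^ (alpha i)^-1.
Proof.
have [_ [_ Phi_int] _ _ _] := KD.
have mPhi i : measurable_fun setT (Phi i) by case/integrableP: (Phi_int i).
have Phi_fin i : {ae nu i, forall y, Phi i y \is a fin_num}.
  by apply: filterS (integrable_ae measurableT (Phi_int i)) => y /(_ I).
have V_neqNy i y : V i y != -oo := V_adm.1 i y.
set z := fun i => fine (gibbs_mass (m i) (alpha i) (V i)).
have z_gt0 i : (0 < z i)%R by apply: fine_gt0.
have ZE i : gibbs_mass (m i) (alpha i) (V i) = (z i)%:E.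
  by rewrite /z fineK // ge0_fin_numE; case/andP: (Z_pos_fin i) => /ltW.
under eq_bigr => i _ do rewrite ZE.
apply: prod_poweR_le_of_tilt => // [i|s].
  exact (gibbs_mass_gt0 (alpha_gt0 i) (V_meas i) (V_neqNy i) (Z_pos_fin i)
    (nu_def i) (mPhi i) (Phi_fin i)).
apply: le_trans (sum_invr_subr_le_integral_tilt c_meas KD alpha_gt0 V_meas V_adm s) _.
apply: lee_sum => i _; apply: lee_wpmul2l.
  by rewrite lee_fin mulr_ge0 ?expR_ge0 // invr_ge0 ltW.
exact (integral_gibbs_tilt_le (alpha_gt0 i) (V_meas i) (V_neqNy i) (Z_pos_fin i)
  (nu_def i) (mPhi i)).
Qed.
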